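(* Let $(R,\mathfrak{m})$ be a commutative Gorenstein henselian local ring. Let $M,N$ be finitely generated $R$-modules having no nonzero free direct summands, and let $f,g\colon M\to N$ be homomorphisms such that $g$ factors through a free $R$-module. Then: (1) $f$ is an isomorphism if and only if $f+g$ is an isomorphism; (2) $f$ is a split epimorphism if and only if $f+g$ is a split epimorphism; (3) $f$ is a split monomorphism if and only if $f+g$ is a split monomorphism; (4) $f$ is irreducible if and only if $f+g$ is irreducible.
   Context: A homomorphism $f\colon X\to Y$ of $R$-modules is irreducible if it is neither a split monomorphism nor a split epimorphism, and whenever $f=gh$ for homomorphisms $h\colon X\to Z$, $g\colon Z\to Y$ (with $Z$ a finitely generated $R$-module), either $g$ is a split epimorphism or $h$ is a split monomorphism. *)

From HB Require Import structures.
From mathcomp Require Import all_boot all_order all_algebra.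
Set Implicit Arguments. Unset Strict Implicit. Unset Printing Implicit Defensive.
Import GRing.Theory.
Local Open Scope ring_scope.

Section Defs.
Variable R : comUnitRingType.

Definition is_ideal (I : R -> Prop) : Prop :=
  [/\ I 0, (forall x y, I x -> I y -> I (x + y)) & (forall r x, I x -> I (r * x))].

Definition ideal_fg (I : R -> Prop) : Prop :=
  exists n (v : 'I_n -> R), forall x, I x <-> exists c : 'I_n -> R, x = \sum_(i < n) c i * v i.

Definition noetherian_ring : Prop := forall I, is_ideal I -> ideal_fg I.

Definition maximal_ideal (m : R -> Prop) : Prop :=
  [/\ is_ideal m, ~ m 1 &
      forall J, is_ideal J -> ~ J 1 -> (forall x, m x -> J x) -> forall x, J x -> m x].

Definition local_ring : Prop :=
  exists m, maximal_ideal m /\ forall m', maximal_ideal m' -> forall x, m' x <-> m x.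

(* henselian (Stacks 04GE): local, and simple roots mod m of monic polynomials lift *)
Definition henselian_local_ring : Prop :=
  local_ring /\
  forall m, maximal_ideal m ->
  forall (p : {poly R}) (a : R), p \is monic -> m p.[a] -> ~ m (p^`()).[a] ->
  exists b, p.[b] = 0 /\ m (b - a).

Definition fingen (M : lmodType R) : Prop :=
  exists n (v : 'I_n -> M), forall x : M, exists c : 'I_n -> R, x = \sum_(i < n) c i *: v i.

Definition free_module (F : lmodType R) : Prop :=
  exists (I : eqType) (b : I -> F),
    (forall x : F, exists (s : seq I) (c : I -> R), x = \sum_(i <- s) c i *: b i) /\
    (forall (s : seq I) (c : I -> R), uniq s -> \sum_(i <- s) c i *: b i = 0 ->
        forall i, i \in s -> c i = 0).

Definition injective_module (E : lmodType R) : Prop :=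
  forall (A B : lmodType R) (i : {linear A -> B}) (h : {linear A -> E}),
    injective i -> exists h' : {linear B -> E}, forall a, h' (i a) = h a.

(* R (as a module over itself) has injective dimension <= n: there is an exact
   sequence 0 -> R -> I_0 -> I_1 -> ... -> I_n -> 0 with all I_j injective
   (encoded with I_(n+1) = 0, exactness at R, I_0, ..., I_n) *)
Definition injdim_R_le (n : nat) : Prop :=
  exists (I : nat -> lmodType R) (e : {linear R^o -> I 0%N})
         (d : forall j, {linear I j -> I j.+1}),
    [/\ forall j, (j <= n)%N -> injective_module (I j),
        injective e,
        forall y, d 0%N y = 0 <-> exists x, e x = y,
        forall j y, (j.+1 <= n)%N -> (d j.+1 y = 0 <-> exists x, d j x = y) &
        forall y : I n.+1, y = 0].

Definition gorenstein_local_ring : Prop :=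
  [/\ noetherian_ring, local_ring & exists n, injdim_R_le n].

End Defs.

Section Maps.
Variable R : comUnitRingType.

Definition is_iso (M N : lmodType R) (f : M -> N) : Prop := bijective f.

Definition split_epi (M N : lmodType R) (f : M -> N) : Prop :=
  exists s : {linear N -> M}, forall y, f (s y) = y.

Definition split_mono (M N : lmodType R) (f : M -> N) : Prop :=
  exists p : {linear N -> M}, forall x, p (f x) = x.

Definition irreducible_hom (X Y : lmodType R) (f : X -> Y) : Prop :=
  ~ split_mono f /\ ~ split_epi f /\
  forall (Z : lmodType R) (h : {linear X -> Z}) (g : {linear Z -> Y}),
    fingen Z -> (forall x, f x = g (h x)) -> split_epi g \/ split_mono h.

Definition direct_summand (F M : lmodType R) : Prop :=
  exists (i : {linear F -> M}) (p : {linear M -> F}), forall x, p (i x) = x.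

Definition no_free_summand (M : lmodType R) : Prop :=
  forall F : lmodType R, free_module F -> direct_summand F M ->
    forall x : F, x = 0.

Definition factors_through_free (M N : lmodType R) (g : M -> N) : Prop :=
  exists (F : lmodType R) (h : {linear M -> F}) (k : {linear F -> N}),
    free_module F /\ forall x, g x = k (h x).

End Maps.

(* Over a local ring with maximal ideal m, a module X without free summands has all
   linear forms X -> R valued in m, since a form taking a unit value splits off a copy
   of R.  As M is finitely generated, g factors through some R^n, say g = k h.  If s is
   a section of f, then (f + g) s = 1 + k (h s) where h s has entries in m; hence the
   matrix 1 + (h s) k has determinant 1 mod m, is invertible, and so is 1 + k (h s):
   f + g is a split epimorphism.  Split monomorphisms are dual, isomorphisms are the
   maps that are both, and a factorization of f + g through Z yields one of f through
   Z x R^n, which transfers irreducibility.  The converses follow by adding -g. *)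

From HB Require Import structures.
From mathcomp Require Import all_boot all_order all_algebra fingroup perm.
From mathcomp Require classical_sets.
From Stdlib Require Import Classical ClassicalEpsilon FunctionalExtensionality.
Set Implicit Arguments. Unset Strict Implicit. Unset Printing Implicit Defensive.
Import GRing.Theory.
Local Open Scope ring_scope.

Definition mklinear (R : comUnitRingType) (U V : lmodType R) (f : U -> V)
  (fL : linear f) : {linear U -> V} :=
  HB.pack f (GRing.isLinear.Build R U V *:%R f fL).

Section Ideals.
Variables (R : comUnitRingType) (I : R -> Prop).
Hypothesis I_ideal : is_ideal I.

Lemma ideal0 : I 0. Proof. by case: I_ideal. Qed.
Lemma idealD x y : I x -> I y -> I (x + y). Proof. by case: I_ideal => _ + _; apply. Qed.
Lemma idealMl r x : I x -> I (r * x). Proof. by case: I_ideal => _ _; apply. Qed.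
Lemma idealMr r x : I x -> I (x * r). Proof. by rewrite mulrC; apply: idealMl. Qed.
Lemma idealB x y : I x -> I y -> I (x - y).
Proof. by move=> Ix Iy; rewrite -mulN1r; apply/idealD/idealMl. Qed.

Lemma ideal_sum (J : Type) (s : seq J) (P : pred J) (F : J -> R) :
  (forall j, P j -> I (F j)) -> I (\sum_(j <- s | P j) F j).
Proof. by move=> IF; elim/big_ind: _ => //; [exact: ideal0 | exact: idealD]. Qed.

End Ideals.

Lemma principal_ideal (R : comUnitRingType) (x : R) :
  is_ideal (fun y => exists r, y = r * x).
Proof.
split; first by exists 0; rewrite mul0r.
  by move=> _ _ [r ->] [s ->]; exists (r + s); rewrite mulrDl.
by move=> r _ [s ->]; exists (r * s); rewrite mulrA.
Qed.

Lemma ideal_sub_maximal (R : comUnitRingType) (J : R -> Prop) :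
  is_ideal J -> ~ J 1 -> exists m, maximal_ideal m /\ forall x, J x -> m x.
Proof.
move=> J_ideal J1.
pose proper_sup (A : R -> Prop) := [/\ is_ideal A, ~ A 1 & forall x, J x -> A x].
(* Zorn needs the union of the empty chain to qualify, hence the empty set is admitted. *)
pose P (A : R -> Prop) := proper_sup A \/ forall x, ~ A x.
have [A [PA A_max]] : exists A, P A /\ forall B, classical_sets.proper A B -> ~ P B.
  apply: classical_sets.Zorn_bigcup => F FP F_total.
  case: (classic (exists A x, F A /\ A x)) => [[A0 [x0 [FA0 A0x0]]] | F_empty]; last first.
    by right=> x [A FA Ax]; apply: F_empty; exists A, x.
  have member_proper A x : F A -> A x -> proper_sup A.
    by move=> FA Ax; case: (FP A FA) => // /(_ x).
  have [A0_ideal _ JA0] := member_proper A0 x0 FA0 A0x0.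
  left; split.
  - split; first by exists A0 => //; apply: ideal0.
      move=> x y [A FA Ax] [B FB By].
      have [[A_ideal _ _] [B_ideal _ _]] := (member_proper A x FA Ax, member_proper B y FB By).
      have [AB | BA] := F_total A B FA FB.
        by exists B => //; apply: idealD => //; apply: AB.
      by exists A => //; apply: idealD => //; apply: BA.
    move=> r x [A FA Ax]; have [A_ideal _ _] := member_proper A x FA Ax.
    by exists A => //; apply: idealMl.
  - by move=> [A FA A1]; have [_ + _] := member_proper A 1 FA A1.
  - by move=> x Jx; exists A0 => //; apply: JA0.
have [A_ideal A1 JA] : proper_sup A.
  case: PA => // A_empty; exfalso; apply: (A_max J); last by left.
  by split=> [x /A_empty // | /(_ 0 (ideal0 J_ideal)) /A_empty].
exists A; split => //; split => // K K_ideal K1 AK x Kx.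
apply: NNPP => Ax; apply: (A_max K); first by split => // /(_ x Kx).
by left; split => // y /JA /AK.
Qed.

Lemma free_regular (R : comUnitRingType) : free_module R^o.
Proof.
exists unit, (fun=> 1); split=> [x | s c s_uniq].
  by exists [:: tt], (fun=> x); rewrite big_seq1 [_ *: _]mulr1.
case: s s_uniq => [|[] [|[] s]] //= _; rewrite big_seq1 [_ *: _]mulr1 => c0 [] //.
Qed.

Lemma fingen_rV (R : comUnitRingType) n : fingen 'rV[R]_n.
Proof. by exists n, (delta_mx 0) => r; exists (r 0); apply: row_sum_delta. Qed.

Lemma fingen_pair (R : comUnitRingType) (A B : lmodType R) :
  fingen A -> fingen B -> fingen (A * B)%type.
Proof.
move=> [p [v v_span]] [q [w w_span]].
pose gen i := match split i with inl a => (v a, 0) | inr b => (0, w b) end.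
exists (p + q)%N, gen => [[x y]].
have [[c ->] [d ->]] := (v_span x, w_span y).
exists (fun i => match split i with inl a => c a | inr b => d b end).
have split_lshift i : split (lshift q i) = inl i := unsplitK (inl i).
have split_rshift i : split (rshift p i) = inr i := unsplitK (inr i).
rewrite big_split_ord /gen /=.
under [in RHS]eq_bigr => i _ do rewrite split_lshift.
under [X in _ = _ + X]eq_bigr => i _ do rewrite split_rshift.
apply: injective_projections; rewrite /= !raddf_sum /=.
  by rewrite [X in _ + X]big1 ?addr0 // => i _; rewrite scaler0.
by rewrite [X in _ = X + _]big1 ?add0r // => i _; rewrite scaler0.
Qed.

Lemma bijective_split (R : comUnitRingType) (M N : lmodType R) (f : M -> N) :
  linear f -> bijective f <-> split_epi f /\ split_mono f.
Proof.
move=> fL; split=> [[f' fK f'K] | [[s fs] [p pf]]].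
  have f'L : linear f' := can2_linear (f := mklinear fL) fK f'K.
  by split; exists (mklinear f'L).
by exists s => // x; rewrite -[LHS]pf fs pf.
Qed.

Section BasisCoordinates.
Local Unset Implicit Arguments.
Variables (R : comUnitRingType) (F : lmodType R) (I : eqType) (b : I -> F).
Hypothesis b_span :
  forall x : F, exists (s : seq I) (c : I -> R), x = \sum_(i <- s) c i *: b i.
Hypothesis b_free : forall (s : seq I) (c : I -> R), uniq s ->
  \sum_(i <- s) c i *: b i = 0 -> forall i, i \in s -> c i = 0.

(* Finitely supported coefficient families are encoded as lists of (index, coefficient)
   pairs; an index may occur several times, [coef] adds up its coefficients. *)
Definition combination (L : seq (I * R)) : F := \sum_(p <- L) p.2 *: b p.1.
Definition coef (L : seq (I * R)) t : R := \sum_(p <- L | p.1 == t) p.2.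
Definition scale_combination a (L : seq (I * R)) := [seq (p.1, a * p.2) | p <- L].

Lemma combination_cat L L' : combination (L ++ L') = combination L + combination L'.
Proof. exact: big_cat. Qed.

Lemma coef_cat L L' t : coef (L ++ L') t = coef L t + coef L' t.
Proof. exact: big_cat. Qed.

Lemma combinationZ a L : combination (scale_combination a L) = a *: combination L.
Proof.
by rewrite /combination big_map scaler_sumr; apply: eq_bigr => p _; rewrite scalerA.
Qed.

Lemma coefZ a L t : coef (scale_combination a L) t = a * coef L t.
Proof. by rewrite /coef big_map mulr_sumr. Qed.

Lemma combination_regroup L :
  combination L = \sum_(t <- undup (map fst L)) coef L t *: b t.
Proof.
under eq_bigr => t _ do rewrite /coef scaler_suml.
rewrite (exchange_big_dep xpredT) //=; apply: eq_big_seq => p pL.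
rewrite -big_filter (eq_filter (_ : _ =1 pred1 p.1)); last by move=> t; rewrite /= eq_sym.
by rewrite filter_pred1_uniq ?undup_uniq ?mem_undup ?map_f // big_seq1.
Qed.

Lemma coef_combination0 L t : combination L = 0 -> coef L t = 0.
Proof.
move=> L0; have [tL | tNL] := boolP (t \in undup (map fst L)).
  by apply: b_free tL; rewrite ?undup_uniq // -combination_regroup.
rewrite /coef big1_seq // => p /andP [/eqP pt pL]; case/negP: tNL.
by rewrite mem_undup -pt map_f.
Qed.

Lemma combination_surj x : exists L, combination L = x.
Proof.
have [s [c ->]] := b_span x; exists [seq (i, c i) | i <- s].
by rewrite /combination big_map.
Qed.

Definition basis_coord_fun t (x : F) : R^o :=
  coef (proj1_sig (constructive_indefinite_description _ (combination_surj x))) t.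

Lemma basis_coord_fun_combination L t : basis_coord_fun t (combination L) = coef L t.
Proof.
rewrite /basis_coord_fun; case: constructive_indefinite_description => L' L'L /=.
apply/eqP; rewrite -subr_eq0 -mulN1r -coefZ -coef_cat; apply/eqP/coef_combination0.
by rewrite combination_cat combinationZ L'L scaleN1r subrr.
Qed.

Lemma basis_coord_is_linear t : linear (basis_coord_fun t).
Proof.
move=> a x y; have [[Lx <-] [Ly <-]] := (combination_surj x, combination_surj y).
by rewrite -combinationZ -combination_cat !basis_coord_fun_combination coef_cat coefZ.
Qed.

Definition basis_coord t := mklinear (basis_coord_is_linear t).

Lemma basis_coord_basis t i : basis_coord t (b i) = (i == t)%:R.
Proof.
have -> : b i = combination [:: (i, 1)] by rewrite /combination big_seq1 scale1r.
by rewrite /= basis_coord_fun_combination /coef big_cons big_nil /= addr0; case: eqP.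
Qed.

Lemma basis_coord_expansion (S s : seq I) (c : I -> R) : uniq S -> {subset s <= S} ->
  \sum_(t <- S) basis_coord t (\sum_(i <- s) c i *: b i) *: b t = \sum_(i <- s) c i *: b i.
Proof.
move=> S_uniq sS.
under eq_bigr => t _ do rewrite linear_sum scaler_suml.
rewrite exchange_big; apply: eq_big_seq => i /sS iS.
under eq_bigr => t _ do rewrite linearZ -scalerA.
rewrite -scaler_sumr; congr (_ *: _).
under eq_bigr => t _ do rewrite basis_coord_basis.
rewrite (bigD1_seq i) //= eqxx scale1r big1 ?addr0 // => t ti.
by rewrite eq_sym (negbTE ti) scale0r.
Qed.

Definition basis_coords_fun (S : seq I) (x : F) : 'rV[R]_(size S) :=
  \row_j basis_coord (tnth (in_tuple S) j) x.

Lemma basis_coords_is_linear S : linear (basis_coords_fun S).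
Proof. by move=> a x y; apply/rowP => j; rewrite !mxE linearP. Qed.

Definition basis_coords S := mklinear (basis_coords_is_linear S).

Definition basis_comb_fun (S : seq I) (r : 'rV[R]_(size S)) : F :=
  \sum_j r 0 j *: b (tnth (in_tuple S) j).

Lemma basis_comb_is_linear S : linear (basis_comb_fun S).
Proof.
move=> a r r'; rewrite /basis_comb_fun scaler_sumr -big_split.
by apply: eq_bigr => j _; rewrite !mxE scalerDl scalerA.
Qed.

Definition basis_comb S := mklinear (basis_comb_is_linear S).

Lemma basis_comb_coords (S s : seq I) (c : I -> R) : uniq S -> {subset s <= S} ->
  basis_comb S (basis_coords S (\sum_(i <- s) c i *: b i)) = \sum_(i <- s) c i *: b i.
Proof.
move=> S_uniq sS; rewrite -[RHS](basis_coord_expansion S s c S_uniq sS) [RHS]big_tnth.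
by apply: eq_bigr => j _; rewrite mxE.
Qed.

End BasisCoordinates.

Arguments basis_coords {R F I b} b_span b_free S.
Arguments basis_comb {R F I} b S.

Section FiniteFreeFactorization.
Variables (R : comUnitRingType) (M N : lmodType R).

Definition factors_through_rV (g : M -> N) :=
  exists n (h : {linear M -> 'rV[R]_n}) (k : {linear 'rV[R]_n -> N}),
    forall x, g x = k (h x).

Lemma factors_through_rVN (g : M -> N) :
  factors_through_rV g -> factors_through_rV (fun x => - g x).
Proof. by move=> [n [h [k gE]]]; exists n, (-%R \o h), k => x /=; rewrite linearN gE. Qed.

Lemma factors_through_free_rV (g : M -> N) :
  fingen M -> factors_through_free g -> factors_through_rV g.
Proof.
move=> [p [v v_span]] [F [h [k [[I [b [b_span b_free]]] gE]]]].
pose supports i (s : seq I) := exists c : I -> R, h (v i) = \sum_(t <- s) c t *: b t.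
have [s s_span] : exists s : 'I_p -> seq I, forall i, supports i (s i).
  by apply: fin_all_exists => i; have [s [c hc]] := b_span (h (v i)); exists s, c.
pose S := undup (flatten [seq s i | i <- enum 'I_p]).
have comb_coords_h x : basis_comb b S (basis_coords b_span b_free S (h x)) = h x.
  have [c ->] := v_span x; rewrite !linear_sum; apply: eq_bigr => i _.
  rewrite !linearZ; congr (_ *: _); have [ci ->] := s_span i.
  apply: basis_comb_coords; first exact: undup_uniq.
  by move=> t ti; rewrite mem_undup; apply/flattenP; exists (s i); rewrite ?map_f ?mem_enum.
exists (size S), (basis_coords b_span b_free S \o h), (k \o basis_comb b S) => x.
by rewrite gE -comb_coords_h.
Qed.

End FiniteFreeFactorization.

(* The inverse is 1 - k (1 + phi k)^-1 phi. *)
Lemma id_plus_comp_inverse (R : comUnitRingType) (X : lmodType R) n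
    (phi : {linear X -> 'rV[R]_n}) (k : {linear 'rV[R]_n -> X}) :
  1%:M + lin1_mx (phi \o k) \in unitmx ->
  exists w : {linear X -> X},
    cancel (fun x => x + k (phi x)) w /\ cancel w (fun x => x + k (phi x)).
Proof.
set B := 1%:M + _ => B_unit.
have phikB r : r + phi (k r) = r *m B by rewrite mulmxDr mulmx1 mul_rV_lin1.
have wL : linear (fun x => x - k (phi x *m invmx B)).
  by move=> a x y; rewrite !linearP mulmxDl -scalemxAl linearP opprD scalerBr addrACA.
exists (mklinear wL); split => x /=.
  by rewrite linearD phikB mulmxK // addrK.
set y := phi x *m invmx B.
rewrite /= linearB -[LHS]addrA [- k y + _]addrC -[k _ - k y]linearB -addrA -opprD.
by rewrite [phi (k y) + y]addrC phikB mulmxKV // subrr linear0 addr0.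
Qed.

Section LocalRing.
Variables (R : comUnitRingType) (m : R -> Prop).
Hypotheses (m_max : maximal_ideal m)
  (m_unique : forall m', maximal_ideal m' -> forall x, m' x <-> m x).

Let m_ideal : is_ideal m. Proof. by case: m_max. Qed.
Let m1 : ~ m 1. Proof. by case: m_max. Qed.

Lemma unit_notin_max x : ~ m x -> x \is a GRing.unit.
Proof.
move=> mx; apply: NNPP => x_nonunit.
have Rx1 : ~ (exists r, 1 = r * x).
  move=> [r r1]; apply: x_nonunit; apply/unitrP; exists r.
  by rewrite -r1 mulrC.
have [m' [m'_max m'_sup]] := ideal_sub_maximal (principal_ideal x) Rx1.
by apply/mx/(m_unique m'_max)/m'_sup; exists 1; rewrite mul1r.
Qed.

Lemma max_congr1M x y : m (x - 1) -> m (y - 1) -> m (x * y - 1).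
Proof.
have -> : x * y - 1 = (x - 1) * y + (y - 1) by rewrite mulrBl mul1r addrA subrK.
by move=> mx my; apply: idealD => //; apply: idealMr.
Qed.

(* Modulo [m] the determinant of [1 + A] is the product of its diagonal entries, i.e. 1. *)
Lemma det_addmx1_unit n (A : 'M[R]_n) : (forall i j, m (A i j)) -> 1%:M + A \in unitmx.
Proof.
move=> mA; rewrite unitmxE; apply: unit_notin_max => m_det.
suff m_det1 : m (\det (1%:M + A) - 1).
  by apply: m1; have := idealB m_ideal m_det m_det1; rewrite opprB addrC subrK.
rewrite /determinant (bigD1 1%g) //= odd_perm1 expr0 mul1r addrAC.
apply: idealD => //.
  elim/big_ind: _ => [|x y|i _]; first by rewrite subrr; apply: ideal0.
    exact: max_congr1M.
  by rewrite perm1 !mxE eqxx addrAC subrr add0r.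
apply: ideal_sum => // s s1; apply: idealMl => //.
have /existsP [i si] : [exists i, s i != i].
  rewrite -negb_forall; apply/negP => /forallP s_id; move/eqP: s1; apply.
  by apply/permP => i; rewrite perm1; apply/eqP/s_id.
rewrite (bigD1 i) //=; apply: idealMr => //.
by rewrite !mxE eq_sym (negbTE si) mulr0n add0r.
Qed.

Lemma form_in_max (X : lmodType R) : no_free_summand X ->
  forall (phi : {linear X -> R^o}) x, m (phi x).
Proof.
move=> X_nfs phi x; apply: NNPP => phix.
have phix_unit := unit_notin_max phix.
have sL : linear (fun r : R^o => (r / phi x) *: x).
  by move=> a r r'; rewrite mulrDl scalerDl scalerA mulrA.
suff /eqP : (1 : R^o) = 0 by rewrite oner_eq0.
apply: (X_nfs _ (free_regular R)); exists (mklinear sL), phi => r /=.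
by rewrite linearZ; apply: divrK.
Qed.

Lemma row_form_in_max (X : lmodType R) : no_free_summand X ->
  forall n (phi : {linear X -> 'rV[R]_n}) x j, m (phi x 0 j).
Proof.
move=> X_nfs n phi x j.
have entryL : linear (fun r : 'rV[R]_n => r 0 j : R^o) by move=> a r r'; rewrite !mxE.
exact: (form_in_max X_nfs (mklinear entryL \o phi)).
Qed.

Lemma id_plus_max_comp_inverse (X : lmodType R) n (phi : {linear X -> 'rV[R]_n})
  (k : {linear 'rV[R]_n -> X}) : (forall x j, m (phi x 0 j)) ->
  exists w : {linear X -> X},
    cancel (fun x => x + k (phi x)) w /\ cancel w (fun x => x + k (phi x)).
Proof.
move=> m_phi; apply/id_plus_comp_inverse/det_addmx1_unit => i j.
by rewrite mxE; apply: m_phi.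
Qed.

Section AddFactorsThroughFree.
Variables (M N : lmodType R).
Hypotheses (M_nfs : no_free_summand M) (N_nfs : no_free_summand N).

Lemma addr_factors_iff (P : (M -> N) -> Prop) :
    (forall f g, factors_through_rV g -> P f -> P (fun x => f x + g x)) ->
  forall f g, factors_through_rV g -> P f <-> P (fun x => f x + g x).
Proof.
move=> P_addr f g g_rV; split=> [|Pfg]; first exact: P_addr.
have -> : f = (fun x => (fun y => f y + g y) x - g x).
  by apply: functional_extensionality => x; rewrite addrK.
exact: P_addr (factors_through_rVN g_rV) Pfg.
Qed.

Lemma split_epi_addr (f g : M -> N) :
  factors_through_rV g -> split_epi f -> split_epi (fun x => f x + g x).
Proof.
move=> [n [h [k gE]]] [s fs].
have [w [_ wK]] :=
  id_plus_max_comp_inverse (phi := h \o s) k (fun y => row_form_in_max M_nfs h (s y)).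
by exists (s \o w) => y /=; rewrite fs gE; apply: wK.
Qed.

Lemma split_mono_addr (f g : M -> N) :
  factors_through_rV g -> split_mono f -> split_mono (fun x => f x + g x).
Proof.
move=> [n [h [k gE]]] [p pf].
have [w [wK _]] := id_plus_max_comp_inverse (p \o k) (row_form_in_max M_nfs h).
by exists (w \o p) => x /=; rewrite linearD pf gE; apply: wK.
Qed.

Lemma split_epi_addr_iff (f g : M -> N) :
  factors_through_rV g -> split_epi f <-> split_epi (fun x => f x + g x).
Proof. exact: (addr_factors_iff (P := @split_epi R M N) split_epi_addr). Qed.

Lemma split_mono_addr_iff (f g : M -> N) :
  factors_through_rV g -> split_mono f <-> split_mono (fun x => f x + g x).
Proof. exact: (addr_factors_iff (P := @split_mono R M N) split_mono_addr). Qed.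

(* A factorization of [f + g] through [Z] yields one of [f] through [Z * 'rV_n]. *)
Lemma irreducible_addr (f g : M -> N) :
  factors_through_rV g -> irreducible_hom f -> irreducible_hom (fun x => f x + g x).
Proof.
move=> g_rV [f_nsm [f_nse f_fact]].
split; first by move/(split_mono_addr_iff f g_rV).
split; first by move/(split_epi_addr_iff f g_rV).
move=> Z a b Z_fg fgE; have [n [h [k gE]]] := g_rV.
have aL : linear (fun x => (a x, h x)) by move=> c x y; rewrite !linearP.
have bL : linear (fun zr : Z * 'rV[R]_n => b zr.1 - k zr.2).
  by move=> c [z r] [z' r']; rewrite /= linearP [k _]linearP scalerBr opprD addrACA.
have fE x : f x = mklinear bL (mklinear aL x) by rewrite /= -fgE gE addrK.
have ZR_fg := fingen_pair Z_fg (fingen_rV R n).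
case: (f_fact _ (mklinear aL) (mklinear bL) ZR_fg fE) => [[s bs] | [p pa]].
  left; have [w [_ wK]] := id_plus_max_comp_inverse (phi := snd \o s) k
    (row_form_in_max N_nfs (snd \o s)).
  exists (fst \o s \o w) => y /=.
  by have /eqP := bs (w y); rewrite /= subr_eq => /eqP ->; apply: wK.
right; have qL : linear (fun r => p (0, r)).
  move=> c r r'; rewrite -linearP; congr (p _).
  by apply: injective_projections; rewrite /= ?scaler0 ?addr0.
have [w [wK _]] := id_plus_max_comp_inverse (phi := -%R \o h) (mklinear qL)
  (row_form_in_max M_nfs (-%R \o h)).
have rL : linear (fun z => p (z, 0)).
  move=> c z z'; rewrite -linearP; congr (p _).
  by apply: injective_projections; rewrite /= ?scaler0 ?addr0.
exists (w \o mklinear rL) => x /=.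
have -> : p (a x, 0) = x + p (0, - h x).
  have -> : (a x, 0) = (a x, h x) + (0, - h x).
    by apply: injective_projections; rewrite /= ?addr0 ?subrr.
  by rewrite linearD pa.
exact: wK.
Qed.

Lemma irreducible_addr_iff (f g : M -> N) :
  factors_through_rV g -> irreducible_hom f <-> irreducible_hom (fun x => f x + g x).
Proof. exact: (addr_factors_iff (P := @irreducible_hom R M N) irreducible_addr). Qed.

End AddFactorsThroughFree.
End LocalRing.

Theorem lemma2p3 (R : comUnitRingType)
  (hG : gorenstein_local_ring R) (hH : henselian_local_ring R)
  (M N : lmodType R) (hM : fingen M) (hN : fingen N)
  (hM0 : no_free_summand M) (hN0 : no_free_summand N)
  (f g : {linear M -> N}) (hg : factors_through_free g) :
  let fg := fun x => f x + g x in
  [/\ is_iso f <-> is_iso fg,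
      split_epi f <-> split_epi fg,
      split_mono f <-> split_mono fg &
      irreducible_hom f <-> irreducible_hom fg].
Proof.
move=> fg.
have [[m [m_max m_unique]] _] := hH.
have g_rV := factors_through_free_rV hM hg.
have epi : split_epi f <-> split_epi fg := split_epi_addr_iff m_max m_unique hM0 f g_rV.
have mono : split_mono f <-> split_mono fg := split_mono_addr_iff m_max m_unique hM0 f g_rV.
have irr : irreducible_hom f <-> irreducible_hom fg :=
  irreducible_addr_iff m_max m_unique hM0 hN0 f g_rV.
have fL : linear f by move=> a x y; rewrite linearP.
have fgL : linear fg by move=> a x y; rewrite /fg !linearP scalerDr addrACA.
split=> //; have := bijective_split fL; have := bijective_split fgL; rewrite /is_iso; tauto.
Qed.
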